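(* Let $n\geq 1$ with $n\not\equiv 2\pmod 4$. Then for every $i\in[n]$, $\Lambda(n,i)=\Lambda(n,n-i+1)$.
   Context: $\mathcal C_n^{+-}$ is the set of cyclic permutations $\pi=\pi_1\cdots\pi_n$ of $[n]$ (those consisting of a single $n$-cycle) that are unimodal, i.e. for which there is $e\in\{0,\dots,n\}$ with $\pi_1\cdots\pi_e$ increasing and $\pi_{e+1}\cdots\pi_n$ decreasing. $\Lambda(n,i)$ is the number of $\pi\in\mathcal C_n^{+-}$ with $\pi_i=n$. *)

From mathcomp Require Import all_boot all_fingroup.
Set Implicit Arguments. Unset Strict Implicit. Unset Printing Implicit Defensive.

(* A permutation pi = pi_1 ... pi_n of [n] is encoded as s : {perm 'I_n},
   with pi_(j+1) = (s j) + 1 (0-based positions and values). *)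

Definition cyclic_perm n (s : {perm 'I_n}) : bool := #|porbits s| == 1.

Definition unimodal n (s : {perm 'I_n}) : bool :=
  [exists e : 'I_n.+1, forall j : 'I_n, forall k : 'I_n,
     (j < k) ==> ((k < e) ==> (s j < s k)) && ((e <= j) ==> (s k < s j))].

Definition Lambda n i : nat :=
  #|[set s : {perm 'I_n} | [&& cyclic_perm s, unimodal s &
       [exists j : 'I_n, (val j == i.-1) && (val (s j) == n.-1)]]]|.

From mathcomp Require Import all_boot all_fingroup zify.
Set Implicit Arguments. Unset Strict Implicit. Unset Printing Implicit Defensive.

(* Let s be a cyclic permutation that is unimodal with turning position e
   (increasing on the positions < e, decreasing on the positions >= e), and
   record the itinerary of a point p: the cyclic binary word w with
   w_k = [s^k p >= e], which has e zeros.  Since s increases on one branch and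
   decreases on the other, the points s^k p are ordered like the rotations of
   w in the twisted lexicographic order; hence (s, p) is determined by w, up
   to one bit that breaks the ties occurring when w = uu with an odd number of
   ones in u.  The words that arise are exactly the primitive ones (realized
   once) and these odd squares (realized twice), and for n <> 2 mod 4 this
   count is invariant under exchanging the letters.  Thus n #A_e = n #A_(n-e)
   for the set A_e of such permutations.  As the maximum of a permutation in
   A_e sits at position e or e + 1 (counting from 1),
   #A_e = Lambda(n, e) + Lambda(n, e + 1), and the symmetry of Lambda follows
   by induction on e. *)

(* Lexicographic order on the first [L] letters with [false < true], where
   every common letter [true] reverses the comparison of the remaining
   letters: the order of itineraries of a map that increases on branch
   [false] and decreases on branch [true]. *)
Fixpoint twist_lt (L : nat) (a b : nat -> bool) : bool :=
  if L is L'.+1 then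
    if a 0 == b 0 then
      if a 0 then twist_lt L' (fun k => b k.+1) (fun k => a k.+1)
      else twist_lt L' (fun k => a k.+1) (fun k => b k.+1)
    else b 0
  else false.

Lemma eq_twist_lt L a a' b b' :
  (forall k, k < L -> a k = a' k) -> (forall k, k < L -> b k = b' k) ->
  twist_lt L a b = twist_lt L a' b'.
Proof.
elim: L a a' b b' => [//|L IH] a a' b b' Ea Eb /=.
rewrite -Ea // -Eb //; case: ifP => // _.
by case: (a 0); apply: IH => k Hk; rewrite ?Ea ?Eb.
Qed.

Lemma twist_lt_eqfun L a b :
  (forall k, k < L -> a k = b k) -> twist_lt L a b = false.
Proof.
elim: L a b => [//|L IH] a b E /=.
by rewrite E // eqxx; case: (b 0); apply: IH => k Hk; rewrite E.
Qed.

Lemma twist_ltxx L a : twist_lt L a a = false.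
Proof. exact: twist_lt_eqfun. Qed.

Lemma twist_lt_asym L a b : twist_lt L a b -> ~~ twist_lt L b a.
Proof.
elim: L a b => [//|L IH] a b /=; rewrite eq_sym.
case: eqP => [->|]; first by case: (a 0) => /IH.
by case: (a 0); case: (b 0).
Qed.

Lemma twist_lt_trans L a b c :
  twist_lt L a b -> twist_lt L b c -> twist_lt L a c.
Proof.
elim: L a b c => [//|L IH] a b c /=.
case: (a 0) (b 0) (c 0) => [] [] [] //= H1 H2; [exact: IH H2 H1 | exact: IH H1 H2].
Qed.

Lemma twist_lt_total L a b :
  ~~ twist_lt L a b -> ~~ twist_lt L b a -> forall k, k < L -> a k = b k.
Proof.
elim: L a b => [//|L IH] a b /=; rewrite (eq_sym (b 0)).
case: eqP => [E|]; last by case: (a 0); case: (b 0).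
rewrite E; case: (b 0) => H1 H2 [|k] Hk //.
- by rewrite (IH _ _ H2 H1 k).
- by rewrite (IH _ _ H1 H2 k).
Qed.

Lemma twist_ltS L a b : a L = b L -> twist_lt L.+1 a b = twist_lt L a b.
Proof.
elim: L a b => [|L IH] a b E; first by rewrite /= E eqxx; case: (b 0).
by rewrite [LHS]/= [RHS]/=; case: ifP => // _; case: (a 0); apply: IH.
Qed.

Lemma twist_lt_tail L a b : a 0 = b 0 ->
  twist_lt L.+1 a b = if a 0 then twist_lt L (fun k => b k.+1) (fun k => a k.+1)
                      else twist_lt L (fun k => a k.+1) (fun k => b k.+1).
Proof. by move=> E /=; rewrite -E eqxx. Qed.

Lemma twist_lt_head L a b : a 0 != b 0 -> twist_lt L.+1 a b = b 0.
Proof. by move=> /negbTE /= ->. Qed.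

Section Cyclic.

Variable m : nat.
Local Notation n := m.+1.
Implicit Types (s : {perm 'I_n}) (x y p : 'I_n).

Lemma cyclic_porbit s x y : cyclic_perm s -> y \in porbit s x.
Proof.
move=> /cards1P[P EP].
have /[!(EP, inE)] /eqP-> : porbit s x \in porbits s by apply: imset_f.
have /[!(EP, inE)] /eqP<- : porbit s y \in porbits s by apply: imset_f.
exact: porbit_id.
Qed.

Lemma card_porbit_cyclic s x : cyclic_perm s -> #|porbit s x| = n.
Proof.
move=> Hc; have -> : porbit s x = [set: 'I_n].
  by apply/setP => y; rewrite inE cyclic_porbit.
by rewrite cardsT card_ord.
Qed.

Lemma cyclic_expg_n s x : cyclic_perm s -> (s ^+ n)%g x = x.
Proof. by move=> Hc; have := iter_porbit s x; rewrite (card_porbit_cyclic x Hc) permX. Qed.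

Lemma cyclic_expg_mod s x k : cyclic_perm s -> (s ^+ (k %% n))%g x = (s ^+ k)%g x.
Proof.
move=> Hc; rewrite {2}(divn_eq k n) expgD mulnC expgM permM.
by elim: (k %/ n) => [|q IH]; rewrite ?expg0 ?perm1 // expgS permM cyclic_expg_n.
Qed.

Lemma cyclic_expg_inj s x i j : cyclic_perm s -> i < n -> j < n ->
  (s ^+ i)%g x = (s ^+ j)%g x -> i = j.
Proof.
move=> Hc Hi Hj E; have := uniq_traject_porbit s x.
rewrite (card_porbit_cyclic x Hc) => U.
apply/eqP; rewrite -(nth_uniq x _ _ U) ?size_traject //.
by rewrite !nth_traject // -!permX E.
Qed.

Lemma cyclic_expg_eqmod s x i j : cyclic_perm s ->
  ((s ^+ i)%g x == (s ^+ j)%g x) = (i == j %[mod n]).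
Proof.
move=> Hc; apply/eqP/eqP => E; last by rewrite -[LHS]cyclic_expg_mod // E cyclic_expg_mod.
apply: (cyclic_expg_inj (x := x) Hc (ltn_pmod i (ltn0Sn m)) (ltn_pmod j (ltn0Sn m))).
by rewrite !cyclic_expg_mod.
Qed.

Lemma cyclic_expg_neq s x v D : cyclic_perm s -> ~~ (n %| D) ->
  (s ^+ v)%g x != (s ^+ (v + D))%g x.
Proof.
move=> Hc; apply: contra; rewrite cyclic_expg_eqmod // -{1}[v]addn0 eqn_modDl.
by rewrite mod0n eq_sym.
Qed.

Lemma porbit_cyclic s x : (forall y, y \in porbit s x) -> cyclic_perm s.
Proof.
move=> Hx; apply/cards1P; exists (porbit s x).
apply/setP => P; rewrite inE; apply/imsetP/eqP => [[y _ ->]|->]; last by exists x.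
by apply/eqP; rewrite eq_porbit_mem.
Qed.

Lemma card_ord_lt c : c <= n -> #|[set y : 'I_n | y < c]| = c.
Proof.
elim: c => [|c IH] Hc.
  by apply/eqP; rewrite cards_eq0; apply/eqP/setP => y; rewrite !inE.
have -> : [set y : 'I_n | y < c.+1] = Ordinal Hc |: [set y : 'I_n | y < c].
  by apply/setP => y; rewrite !inE ltnS leq_eqVlt -val_eqE.
by rewrite cardsU1 inE ltnn IH // ltnW.
Qed.

Lemma card_perm_lt (X : {perm 'I_n}) c : c <= n -> #|[set u | X u < c]| = c.
Proof.
move=> Hc; rewrite -[in RHS](card_ord_lt Hc) -(card_imset _ (@perm_inj _ X)).
apply: eq_card => y; rewrite inE.
apply/imsetP/idP => [[u] /[!inE] Hu ->|Hy] //.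
by exists (X^-1%g y); rewrite ?inE permKV.
Qed.

Lemma orbit_inj s p : cyclic_perm s -> injective (fun k : 'I_n => (s ^+ k)%g p).
Proof. by move=> Hc i j /(cyclic_expg_inj Hc (ltn_ord i) (ltn_ord j)) /val_inj. Qed.

Definition orbit_perm s p (Hc : cyclic_perm s) : {perm 'I_n} := perm (@orbit_inj s p Hc).

Lemma orbit_permE s p (Hc : cyclic_perm s) k : orbit_perm p Hc k = (s ^+ k)%g p.
Proof. by rewrite permE. Qed.

End Cyclic.

Section Unimodal.

Variable m : nat.
Local Notation n := m.+1.
Implicit Types (s : {perm 'I_n}) (x y : 'I_n).

Definition unimodal_at s (e : nat) : bool :=
  [forall j : 'I_n, forall k : 'I_n,
     (j < k) ==> ((k < e) ==> (s j < s k)) && ((e <= j) ==> (s k < s j))].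

Lemma unimodalE s : unimodal s = [exists e : 'I_n.+1, unimodal_at s e].
Proof. by []. Qed.

Lemma unimodal_atP s e (j k : 'I_n) : unimodal_at s e -> j < k ->
  (k < e -> s j < s k) /\ (e <= j -> s k < s j).
Proof.
move=> /forallP/(_ j)/forallP/(_ k)/implyP H /H/andP[/implyP H1 /implyP H2].
by split.
Qed.

Lemma unimodal_at_lt s e x y : unimodal_at s e -> x != y ->
  (e <= x) = (e <= y) -> (s x < s y) = (x < y) (+) (e <= x).
Proof.
move=> Hu Hne Hl; case: (ltngtP x y) => H; last by rewrite (val_inj H) eqxx in Hne.
- have [H1 H2] := unimodal_atP Hu H; case: (leqP e x) => Hex /=.
    by apply/negbTE; rewrite -leqNgt ltnW // H2.
  by rewrite H1 // ltnNge -Hl -ltnNge.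
- have [H1 H2] := unimodal_atP Hu H; case: (leqP e x) => Hex /=.
    by rewrite H2 // -Hl.
  by apply/negbTE; rewrite -leqNgt ltnW // H1.
Qed.

Definition itin s e x : nat -> bool := fun k => e <= (s ^+ k)%g x.

Lemma itinS s e x k : itin s e x k.+1 = itin s e (s x) k.
Proof. by rewrite /itin expgS permM. Qed.

Lemma itin_twist_lt s e L x y : unimodal_at s e -> x < y ->
  twist_lt L (itin s e x) (itin s e y) \/
  (forall k, k < L -> itin s e x k = itin s e y k).
Proof.
move=> Hu; elim: L x y => [|L IH] x y Hxy; first by right.
have Ex : itin s e x 0 = (e <= x) by rewrite /itin expg0 perm1.
have Ey : itin s e y 0 = (e <= y) by rewrite /itin expg0 perm1.
have [H1 H2] := unimodal_atP Hu Hxy.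
rewrite /= Ex Ey; case: (leqP e x) => Hex; case: (leqP e y) => Hey /=.
- case: (IH _ _ (H2 Hex)) => [T|A]; [left|right].
    by rewrite (@eq_twist_lt L _ (itin s e (s y)) _ (itin s e (s x))) // => k _; rewrite itinS.
  by case=> [|k] Hk; rewrite ?Ex ?Ey ?Hex ?Hey // !itinS A.
- by have := leq_ltn_trans Hex (ltn_trans Hxy Hey); rewrite ltnn.
- by left.
- case: (IH _ _ (H1 Hey)) => [T|A]; [left|right].
    by rewrite (@eq_twist_lt L _ (itin s e (s x)) _ (itin s e (s y))) // => k _; rewrite itinS.
  by case=> [|k] Hk; rewrite ?Ex ?Ey; [rewrite (ltn_geF Hex) (ltn_geF Hey) | rewrite !itinS A].
Qed.

End Unimodal.

Section Words.

Variable m : nat.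
Local Notation n := m.+1.
Implicit Types (w : {ffun 'I_n -> bool}) (D : nat).

Definition letter w k : bool := w (inord (k %% n)).

Lemma letter_ord w (i : 'I_n) : letter w i = w i.
Proof. by rewrite /letter modn_small // inord_val. Qed.

Lemma letter_mod w k : letter w (k %% n) = letter w k.
Proof. by rewrite /letter modn_mod. Qed.

Lemma letterDn w k : letter w (k + n) = letter w k.
Proof. by rewrite /letter modnDr. Qed.

Lemma letterDmr w a b : letter w (a + b %% n) = letter w (a + b).
Proof. by rewrite -letter_mod modnDmr letter_mod. Qed.

Definition is_period w D := [forall i : 'I_n, letter w (i + D) == w i].

Lemma is_periodP w D :
  reflect (forall k, letter w (k + D) = letter w k) (is_period w D).
Proof.
apply: (iffP forallP) => [H k|H i]; last by rewrite H letter_ord.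
have := eqP (H (Ordinal (ltn_pmod k (ltn0Sn m)))); rewrite -letter_ord /= => E.
by rewrite -letter_mod -modnDml letter_mod E letter_mod.
Qed.

Lemma is_periodM w D : is_period w D -> forall q k, letter w (k + q * D) = letter w k.
Proof.
move/is_periodP=> H; elim=> [|q IH] k; first by rewrite addn0.
by rewrite mulSn addnA IH H.
Qed.

Lemma is_period_n w : is_period w n.
Proof. by apply/is_periodP => k; rewrite letterDn. Qed.

Definition period w := (find (is_period w) (iota 1 n)).+1.

Lemma has_period w : has (is_period w) (iota 1 n).
Proof. by apply/hasP; exists n; rewrite ?is_period_n // mem_iota leqnn. Qed.

Lemma period_le w : period w <= n.
Proof. by have := has_period w; rewrite has_find size_iota. Qed.

Lemma period_gt0 w : 0 < period w.
Proof. by []. Qed.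

Lemma period_is_period w : is_period w (period w).
Proof.
have := nth_find 0 (has_period w); rewrite nth_iota ?add1n //.
by have := has_period w; rewrite has_find size_iota.
Qed.

Lemma period_min w D : 0 < D -> D < period w -> ~~ is_period w D.
Proof.
move=> D_gt0 D_lt.
have := @before_find _ 0 (is_period w) (iota 1 n) D.-1.
rewrite nth_iota; last by have := period_le w; rewrite /period in D_lt *; lia.
by rewrite add1n prednK // => ->; rewrite /period in D_lt; lia.
Qed.

Lemma period_dvd w D : is_period w D -> period w %| D.
Proof.
move=> HD; have Hr : is_period w (D %% period w).
  apply/is_periodP => k.
  rewrite -(is_periodM (period_is_period w) (D %/ period w) (k + D %% period w)).
  by rewrite -addnA (addnC (D %% period w)) -divn_eq; apply/is_periodP.
have [E|r_gt0] := posnP (D %% period w); first by apply/eqP.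
by have := period_min r_gt0 (ltn_pmod D (period_gt0 w)); rewrite Hr.
Qed.

Definition compl w : {ffun 'I_n -> bool} := [ffun i => ~~ w i].

Lemma letter_compl w k : letter (compl w) k = ~~ letter w k.
Proof. by rewrite /letter ffunE. Qed.

Lemma complK : involutive compl.
Proof. by move=> w; apply/ffunP => i; rewrite !ffunE negbK. Qed.

Lemma is_period_compl w D : is_period (compl w) D = is_period w D.
Proof.
apply/is_periodP/is_periodP => H k; last by rewrite !letter_compl H.
by apply: negb_inj; rewrite -!letter_compl.
Qed.

Lemma period_compl w : period (compl w) = period w.
Proof. by rewrite /period (eq_find (is_period_compl w)). Qed.

Definition zeros w := #|[set i | ~~ w i]|.

Lemma zeros_le w : zeros w <= n.
Proof. by have := max_card [set i | ~~ w i]; rewrite card_ord. Qed.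

Lemma zeros_compl w : zeros (compl w) = n - zeros w.
Proof.
have := cardsC [set i | ~~ w i]; rewrite card_ord /zeros => E.
have -> : [set i | ~~ compl w i] = ~: [set i | ~~ w i].
  by apply/setP => i; rewrite !inE ffunE.
lia.
Qed.

Definition ones w D := \sum_(k < D) letter w k.

Lemma ones_le w D : ones w D <= D.
Proof.
by rewrite -[X in _ <= X]card_ord -sum1_card; apply: leq_sum => k _; apply: leq_b1.
Qed.

Lemma ones_compl w D : ones (compl w) D = D - ones w D.
Proof.
elim: D => [|D IH]; first by rewrite /ones !big_ord0.
rewrite /ones !big_ord_recr /= -!/(ones _ _) IH letter_compl.
by have := ones_le w D; case: (letter w D) => /=; lia.
Qed.

Lemma ones_window w D a : is_period w D ->
  \sum_(i < D) letter w (a + i) = ones w D.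
Proof.
move/is_periodP=> HD; elim: a => [|a IH]; first by apply: eq_bigr => i _; rewrite add0n.
case: D HD IH => [|D] HD IH; first by rewrite /ones !big_ord0.
rewrite -IH big_ord_recr big_ord_recl /= addn0 addSnnS HD addnC; congr (_ + _).
by apply: eq_bigr => i _; rewrite /bump /= add1n addSnnS.
Qed.

Lemma ones_addr w D t : is_period w D -> ones w (t + D) = ones w t + ones w D.
Proof. by move=> HD; rewrite /ones big_split_ord /= ones_window. Qed.

Lemma ones_mull w D j : is_period w D -> ones w (j * D) = j * ones w D.
Proof.
move=> HD; elim: j => [|j IH]; first by rewrite /ones big_ord0.
by rewrite !mulSnr ones_addr // IH.
Qed.

Definition odd_square w := ((period w).*2 == n) && odd (ones w (period w)).

Definition admissible w := (period w == n) || odd_square w.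

Definition multiplicity w := if period w == n then 1 else if odd_square w then 2 else 0.

Lemma odd_square_compl w : n %% 4 != 2 -> odd_square (compl w) = odd_square w.
Proof.
move=> n_mod4; rewrite /odd_square period_compl.
case: eqP => //= /eqP E; rewrite ones_compl oddB ?ones_le //.
suff -> : odd (period w) = false by [].
by move: n_mod4; rewrite -(eqP E) -(odd_double_half (period w)); case: odd; lia.
Qed.

Lemma multiplicity_compl w : n %% 4 != 2 -> multiplicity (compl w) = multiplicity w.
Proof. by move=> n_mod4; rewrite /multiplicity period_compl odd_square_compl. Qed.

End Words.

Section Itinerary.

Variable m : nat.
Local Notation n := m.+1.
Implicit Types (s : {perm 'I_n}) (p : 'I_n).

Definition itinerary s e p : {ffun 'I_n -> bool} := [ffun k : 'I_n => e <= (s ^+ k)%g p].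

Lemma letter_itinerary s e p k : cyclic_perm s ->
  letter (itinerary s e p) k = (e <= (s ^+ k)%g p).
Proof. by move=> Hc; rewrite /letter ffunE inordK ?ltn_pmod // cyclic_expg_mod. Qed.

Lemma itin_itinerary s e p t k : cyclic_perm s ->
  itin s e ((s ^+ t)%g p) k = letter (itinerary s e p) (t + k).
Proof. by move=> Hc; rewrite letter_itinerary // /itin expgD permM. Qed.

Lemma zeros_itinerary s e p : cyclic_perm s -> e <= n -> zeros (itinerary s e p) = e.
Proof.
move=> Hc He; rewrite /zeros -[in RHS](card_perm_lt (orbit_perm p Hc) He).
by apply: eq_card => k; rewrite !inE ffunE orbit_permE -ltnNge.
Qed.

(* Along a period [D] of the itinerary, [s] preserves the two branches, so the
   comparison of [s^v p] with [s^(v+D) p] flips exactly at the letters [true]. *)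
Lemma itinerary_shift_lt s e p D : cyclic_perm s -> unimodal_at s e ->
  is_period (itinerary s e p) D -> ~~ (n %| D) -> forall v,
  ((s ^+ v)%g p < (s ^+ (v + D))%g p) =
  (p < (s ^+ D)%g p) (+) odd (ones (itinerary s e p) v).
Proof.
move=> Hc Hu /is_periodP HD Hnd.
elim=> [|v IH]; first by rewrite expg0 perm1 add0n /ones big_ord0 addbF.
rewrite addSn !expgSr !permM (unimodal_at_lt Hu (cyclic_expg_neq _ _ Hc Hnd));
  last by rewrite -!letter_itinerary // HD.
by rewrite IH -[e <= _]letter_itinerary // /ones big_ord_recr /= oddD oddb addbA.
Qed.

Lemma itinerary_period_dvd s e p D : cyclic_perm s -> unimodal_at s e -> 0 < D ->
  is_period (itinerary s e p) D -> ~~ odd (ones (itinerary s e p) D) -> n %| D.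
Proof.
move=> Hc Hu D_gt0 HD Heven; apply: contraT => Hnd.
pose f j := (s ^+ (j * D))%g p.
have f_step j : (f j < f j.+1) = (p < (s ^+ D)%g p).
  rewrite /f mulSnr (itinerary_shift_lt Hc Hu HD Hnd) ones_mull // oddM.
  by rewrite (negbTE Heven) andbF addbF.
have f_neq j : f j != f j.+1 by rewrite /f mulSnr cyclic_expg_neq.
have f_n : f n = f 0 by rewrite /f mul0n -[LHS]cyclic_expg_mod // modnMr.
case: (boolP (p < (s ^+ D)%g p)) => [c|/negbTE c].
  have := @homo_ltn _ f (fun a b : 'I_n => a < b) (fun y x z => @ltn_trans y x z).
  by move=> /(_ (fun j => etrans (f_step j) c) 0 n (ltn0Sn m)); rewrite f_n ltnn.
have f_dec j : f j.+1 < f j by rewrite ltn_neqAle leqNgt f_step c eq_sym f_neq.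
have := @homo_ltn _ f (fun a b : 'I_n => b < a) (fun y x z Hxy Hyz => ltn_trans Hyz Hxy).
by move=> /(_ f_dec 0 n (ltn0Sn m)); rewrite f_n ltnn.
Qed.

Lemma admissible_itinerary s e p : cyclic_perm s -> unimodal_at s e ->
  admissible (itinerary s e p).
Proof.
move=> Hc Hu; set w := itinerary s e p; rewrite /admissible /odd_square.
have Hd := period_is_period w; have Hle := period_le w; have H0 := period_gt0 w.
case Ho : (odd (ones w (period w))); last first.
  by rewrite eqn_leq Hle dvdn_leq ?(itinerary_period_dvd Hc Hu H0 Hd) ?Ho.
have H2 : is_period w (period w + period w).
  by apply/is_periodP => k; rewrite addnA !(is_periodP _ _ Hd).
have := itinerary_period_dvd Hc Hu _ H2; rewrite ones_addr // oddD addbb.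
move=> /(_ (ltn_addr _ H0) isT) /dvdnP[q Hq]; rewrite andbT -addnn.
by case: q Hq => [|[|[|q]]] Hq; lia.
Qed.

End Itinerary.

Section SuffixOrder.

Variable m : nat.
Local Notation n := m.+1.
Implicit Types (w : {ffun 'I_n -> bool}) (u t v : 'I_n).

Definition suffix_of w (t : nat) : nat -> bool := fun k => letter w (t + k).

Definition same_suffix w u t :=
  [forall k : 'I_n, letter w (u + k) == letter w (t + k)].

Lemma same_suffixP w u t :
  reflect (forall k, letter w (u + k) = letter w (t + k)) (same_suffix w u t).
Proof.
apply: (iffP forallP) => [H k|H k]; last by rewrite H.
by rewrite -letterDmr -[RHS]letterDmr; apply/eqP/(H (Ordinal (ltn_pmod k (ltn0Sn m)))).
Qed.

Lemma same_suffixC w u t : same_suffix w u t = same_suffix w t u.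
Proof. by apply/same_suffixP/same_suffixP => H k; rewrite H. Qed.

Lemma same_suffix_twist_lt w u t :
  same_suffix w u t -> twist_lt n (suffix_of w u) (suffix_of w t) = false.
Proof. by move/same_suffixP=> H; apply: twist_lt_eqfun => k _; rewrite /suffix_of H. Qed.

Lemma same_suffix_period w u t : u < t -> same_suffix w u t -> is_period w (t - u).
Proof.
move=> Hut /same_suffixP H; apply/is_periodP => i.
have := H (i + n - u); have Hu := ltn_ord u; have Ht := ltn_ord t.
have -> : u + (i + n - u) = i + n by lia.
have -> : t + (i + n - u) = i + (t - u) + n by lia.
by rewrite !letterDn.
Qed.

Lemma same_suffix_odd_square w u t : admissible w -> same_suffix w u t -> u < t ->
  odd_square w /\ (t : nat) = u + period w.
Proof.
move=> Hw H Hut; have /dvdnP[q Hq] := period_dvd (same_suffix_period Hut H).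
have Ht := ltn_ord t; have Hp := period_gt0 w.
case/orP: Hw => [/eqP Ep|Hsq]; first by rewrite Ep in Hq; case: q Hq => [|q] Hq; lia.
split=> //; case/andP: Hsq => /eqP E _.
by case: q Hq => [|[|q]] Hq; lia.
Qed.

Lemma odd_ones_addr_period w t : odd_square w ->
  odd (ones w (t + period w)) = ~~ odd (ones w t).
Proof.
by case/andP=> _ Ho; rewrite ones_addr ?period_is_period // oddD Ho addbT.
Qed.

Lemma odd_square_ones_n w : odd_square w -> ~~ odd (ones w n).
Proof.
case/andP=> /eqP <- _; rewrite -addnn ones_addr ?period_is_period //.
by rewrite oddD addbb.
Qed.

Lemma same_suffix_parity w u t : admissible w -> same_suffix w u t -> u != t ->
  odd_square w /\ odd (ones w t) = ~~ odd (ones w u).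
Proof.
move=> Hw H; rewrite neq_ltn => /orP[Hut|Htu].
  by have [Hsq ->] := same_suffix_odd_square Hw H Hut; rewrite odd_ones_addr_period.
rewrite same_suffixC in H; have [Hsq ->] := same_suffix_odd_square Hw H Htu.
by rewrite odd_ones_addr_period ?negbK.
Qed.

(* Equal suffixes occur only in an odd square, at distance [n/2]; such twin
   positions are ordered by the bit [c], twisted by the parity of [ones]. *)
Definition suffix_lt w (c : bool) u t :=
  twist_lt n (suffix_of w u) (suffix_of w t) ||
  [&& same_suffix w u t, u != t & c (+) odd (ones w u)].

Lemma suffix_ltxx w c u : suffix_lt w c u u = false.
Proof. by rewrite /suffix_lt twist_ltxx eqxx andbF. Qed.

Lemma suffix_lt_letter w c u t : ~~ w u -> w t -> suffix_lt w c u t.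
Proof.
move=> Hu Ht; rewrite /suffix_lt twist_lt_head /suffix_of ?addn0 ?letter_ord ?Ht //.
by rewrite (negbTE Hu).
Qed.

Lemma suffix_of0 w u : suffix_of w u 0 = w u.
Proof. by rewrite /suffix_of addn0 letter_ord. Qed.

Lemma suffix_of_ordS w u k : suffix_of w (ordS u) k = suffix_of w u k.+1.
Proof. by rewrite /suffix_of -letter_mod modnDml letter_mod addSnnS. Qed.

Lemma twist_lt_ordS w u t : w u = w t ->
  twist_lt n (suffix_of w (ordS u)) (suffix_of w (ordS t)) =
  twist_lt m (fun k => suffix_of w u k.+1) (fun k => suffix_of w t k.+1).
Proof.
move=> E; rewrite twist_ltS; last by rewrite !suffix_of_ordS /suffix_of !letterDn !letter_ord.
by apply: eq_twist_lt => k _; rewrite suffix_of_ordS.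
Qed.

Lemma same_suffix_ordS w u t : same_suffix w u t -> same_suffix w (ordS u) (ordS t).
Proof.
move/same_suffixP=> H; apply/same_suffixP => k.
by rewrite -!/(suffix_of w _ k) !suffix_of_ordS /suffix_of H.
Qed.

Lemma odd_ones_ordS w t : ~~ odd (ones w n) ->
  odd (ones w (ordS t)) = odd (ones w t) (+) w t.
Proof.
move=> Hn; have E : odd (ones w t.+1) = odd (ones w t) (+) w t.
  by rewrite /ones big_ord_recr /= oddD oddb letter_ord.
have -> : (ordS t : nat) = t.+1 %% n by [].
case: (ltnP t.+1 n) => H; first by rewrite modn_small.
have Et : t.+1 = n by apply/eqP; rewrite eqn_leq H ltn_ord.
by rewrite -E Et modnn /ones big_ord0 (negbTE Hn).
Qed.

Section Order.

Variables (w : {ffun 'I_n -> bool}) (c : bool).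
Hypothesis w_adm : admissible w.

Lemma suffix_lt_asym u t : suffix_lt w c u t -> ~~ suffix_lt w c t u.
Proof.
case/orP => [T|/and3P[E Ne C]].
  have Ne : ~~ same_suffix w u t by apply: contraL T => /same_suffix_twist_lt ->.
  by rewrite /suffix_lt (negbTE (twist_lt_asym T)) same_suffixC (negbTE Ne).
rewrite /suffix_lt same_suffix_twist_lt /=; last by rewrite same_suffixC.
have [_ ->] := same_suffix_parity w_adm E Ne.
by move: C; case: c; case: (odd _); rewrite ?andbF.
Qed.

Lemma suffix_lt_total u t : u != t -> suffix_lt w c u t || suffix_lt w c t u.
Proof.
move=> Ne; rewrite /suffix_lt; case: (boolP (same_suffix w u t)) => E.
  have [_ Hp] := same_suffix_parity w_adm E Ne.
  rewrite -same_suffixC E Ne eq_sym Ne Hp /=.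
  by case: c; case: (odd _); rewrite ?orbT.
case T1 : (twist_lt n _ _) => //; case T2 : (twist_lt n _ _) => //.
have A := twist_lt_total (negbT T1) (negbT T2).
by case/negP: E; apply/forallP => k; rewrite -/(suffix_of w u k) A.
Qed.

Lemma suffix_lt_trans u t v :
  suffix_lt w c u t -> suffix_lt w c t v -> suffix_lt w c u v.
Proof.
move=> H1 H2; have Nuv : u != v.
  by apply: contraTneq H2 => <-; apply: suffix_lt_asym.
move: H1 H2; rewrite /suffix_lt.
case/orP => [T1|/and3P[E1 N1 _]]; case/orP => [T2|/and3P[E2 N2 _]].
- by rewrite (twist_lt_trans T1 T2).
- rewrite (@eq_twist_lt n (suffix_of w u) (suffix_of w u) (suffix_of w v) (suffix_of w t)) ?T1 // => k _.
  by rewrite /suffix_of (same_suffixP _ _ _ E2).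
- rewrite -(@eq_twist_lt n (suffix_of w t) (suffix_of w u) (suffix_of w v) (suffix_of w v)) ?T2 // => k _.
  by rewrite /suffix_of (same_suffixP _ _ _ E1).
- have E3 : same_suffix w u v.
    by apply/same_suffixP => k; rewrite (same_suffixP _ _ _ E1) (same_suffixP _ _ _ E2).
  have [_ P1] := same_suffix_parity w_adm E1 N1.
  have [_ P2] := same_suffix_parity w_adm E2 N2.
  have [_ P3] := same_suffix_parity w_adm E3 Nuv.
  by move: P3; rewrite P2 P1 negbK; case: (odd _).
Qed.

Lemma suffix_lt_ordS0 u t : suffix_lt w c u t -> ~~ w u -> ~~ w t ->
  suffix_lt w c (ordS u) (ordS t).
Proof.
move=> H Hu Ht; rewrite /suffix_lt twist_lt_ordS; last by rewrite (negbTE Hu) (negbTE Ht).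
case/orP: H => [|/and3P[E Ne C]].
  by rewrite twist_lt_tail !suffix_of0 ?(negbTE Hu) ?(negbTE Ht) // => ->.
apply/orP; right; rewrite same_suffix_ordS // (inj_eq (@ordS_inj _)) Ne /=.
have [Hsq _] := same_suffix_parity w_adm E Ne.
by rewrite odd_ones_ordS ?odd_square_ones_n // (negbTE Hu) addbF.
Qed.

Lemma suffix_lt_ordS1 u t : suffix_lt w c u t -> w u -> w t ->
  suffix_lt w c (ordS t) (ordS u).
Proof.
move=> H Hu Ht; rewrite /suffix_lt twist_lt_ordS; last by rewrite Hu Ht.
case/orP: H => [|/and3P[E Ne C]].
  by rewrite twist_lt_tail !suffix_of0 ?Hu ?Ht // => ->.
apply/orP; right; rewrite same_suffix_ordS; last by rewrite same_suffixC.
rewrite (inj_eq (@ordS_inj _)) eq_sym Ne /=.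
have [Hsq Hp] := same_suffix_parity w_adm E Ne.
by rewrite odd_ones_ordS ?odd_square_ones_n // Ht Hp addbT negbK.
Qed.

End Order.

End SuffixOrder.

Section Realization.

Variable m : nat.
Local Notation n := m.+1.
Variables (w : {ffun 'I_n -> bool}) (c : bool).
Implicit Types (u t : 'I_n).

Definition rank t := #|[set u | suffix_lt w c u t]|.

Lemma rank_ltn t : rank t < n.
Proof.
have := @proper_card _ [set u | suffix_lt w c u t] [set: 'I_n].
rewrite cardsT card_ord; apply; apply/properP; split; first exact: subsetT.
by exists t; rewrite ?inE ?suffix_ltxx.
Qed.

Definition rank_ord t : 'I_n := Ordinal (rank_ltn t).

Hypothesis w_adm : admissible w.

Lemma rank_lt u t : suffix_lt w c u t -> rank u < rank t.
Proof.
move=> H; apply: proper_card; apply/properP; split.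
  by apply/subsetP => v; rewrite !inE => /suffix_lt_trans; apply.
by exists u; rewrite !inE ?suffix_ltxx.
Qed.

Lemma rank_ord_inj : injective rank_ord.
Proof.
move=> u t /(congr1 val) /= E; apply/eqP; apply: contraT => Ne.
by case/orP: (suffix_lt_total c w_adm Ne) => /rank_lt; rewrite E ltnn.
Qed.

Definition rank_perm : {perm 'I_n} := perm rank_ord_inj.

Lemma rank_permE t : rank_perm t = rank t :> nat.
Proof. by rewrite permE. Qed.

Lemma rank_perm_lt u t : (rank_perm u < rank_perm t) = suffix_lt w c u t.
Proof.
rewrite !rank_permE; apply/idP/idP => [H|/rank_lt //].
have [E|Ne] := eqVneq u t; first by rewrite E ltnn in H.
by case/orP: (suffix_lt_total c w_adm Ne) => // /rank_lt; rewrite ltnNge ltnW.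
Qed.

Lemma rank_lt_zeros t : (rank t < zeros w) = ~~ w t.
Proof.
case Ht : (w t) => /=.
  apply/negbTE; rewrite -leqNgt; apply: subset_leq_card; apply/subsetP => u.
  by rewrite !inE => Hu; apply: suffix_lt_letter.
have Hz : t \in [set k | ~~ w k] by rewrite inE Ht.
rewrite /zeros (cardsD1 t) Hz add1n ltnS.
apply: subset_leq_card; apply/subsetP => u; rewrite !inE => Hu.
have -> : u != t by apply: contraTneq Hu => ->; rewrite suffix_ltxx.
apply/negP => Hwu; have := suffix_lt_asym w_adm (suffix_lt_letter c (negbT Ht) Hwu).
by rewrite Hu.
Qed.

Definition realization : {perm 'I_n} := (rank_perm^-1 * perm (@ordS_inj n) * rank_perm)%g.

Lemma realization_rank t : realization (rank_perm t) = rank_perm (ordS t).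
Proof. by rewrite /realization !permM permK (permE (@ordS_inj n)). Qed.

Lemma realization_expg k :
  (realization ^+ k)%g (rank_perm ord0) = rank_perm (inord (k %% n)).
Proof.
elim: k => [|k IH].
  by rewrite expg0 perm1 mod0n; congr (rank_perm _); apply: ord_inj; rewrite inordK.
rewrite expgSr permM IH realization_rank; congr (rank_perm _); apply: ord_inj.
by rewrite /= !inordK ?ltn_pmod // -addn1 modnDml addn1.
Qed.

Lemma realization_cyclic : cyclic_perm realization.
Proof.
apply: (@porbit_cyclic _ _ (rank_perm ord0)) => y; apply/porbitP.
by exists (rank_perm^-1%g y); rewrite realization_expg modn_small // inord_val permKV.
Qed.

Lemma realization_unimodal_at : unimodal_at realization (zeros w).
Proof.
apply/forallP => j; apply/forallP => k; apply/implyP.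
have [u ->] : exists u, j = rank_perm u by exists (rank_perm^-1%g j); rewrite permKV.
have [t ->] : exists t, k = rank_perm t by exists (rank_perm^-1%g k); rewrite permKV.
rewrite !realization_rank !rank_perm_lt !rank_permE => Hut.
apply/andP; split; apply/implyP => H.
  have Ht : ~~ w t by rewrite -rank_lt_zeros.
  have Hu : ~~ w u by rewrite -rank_lt_zeros (ltn_trans (rank_lt Hut) H).
  exact: suffix_lt_ordS0.
have Hu : w u by rewrite -[w u]negbK -rank_lt_zeros -leqNgt.
have Ht : w t by rewrite -[w t]negbK -rank_lt_zeros -leqNgt (leq_trans H (ltnW (rank_lt Hut))).
exact: suffix_lt_ordS1.
Qed.

Lemma itinerary_realization : itinerary realization (zeros w) (rank_perm ord0) = w.
Proof.
apply/ffunP => k; rewrite ffunE realization_expg modn_small // inord_val rank_permE.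
by rewrite leqNgt rank_lt_zeros negbK.
Qed.

End Realization.

Section Uniqueness.

Variable m : nat.
Local Notation n := m.+1.
Variables (w : {ffun 'I_n -> bool}) (w_adm : admissible w).
Variables (s : {perm 'I_n}) (e : nat) (p : 'I_n).
Hypotheses (s_cyc : cyclic_perm s) (s_uni : unimodal_at s e).
Hypothesis s_itin : itinerary s e p = w.
Implicit Types (u t : 'I_n).

Local Notation c := (p < (s ^+ period w)%g p).

Lemma itin_orbit u k : itin s e ((s ^+ u)%g p) k = suffix_of w u k.
Proof. by rewrite itin_itinerary // s_itin. Qed.

Lemma orbit_lt_twins u t : same_suffix w u t -> u != t ->
  ((s ^+ u)%g p < (s ^+ t)%g p) = c (+) odd (ones w u).
Proof.
move=> E Ne; have [w_sq _] := same_suffix_parity w_adm E Ne.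
have Hnd : ~~ (n %| period w).
  case/andP: w_sq => /eqP w_sq _; apply/negP => /(dvdn_leq (period_gt0 w)).
  by have := period_gt0 w; lia.
have := @itinerary_shift_lt _ s e p (period w) s_cyc s_uni.
rewrite s_itin => /(_ (period_is_period w) Hnd) shift.
case: (ltngtP u t) => Hut; last by case/eqP: Ne; apply: val_inj.
  by have [_ ->] := same_suffix_odd_square w_adm E Hut; rewrite shift.
rewrite same_suffixC in E; have [_ Eu] := same_suffix_odd_square w_adm E Hut.
rewrite Eu ltnNge leq_eqVlt shift val_eqE (negbTE (cyclic_expg_neq _ _ s_cyc Hnd)).
by rewrite /= odd_ones_addr_period // addbN.
Qed.

Lemma suffix_lt_of_orbit_lt u t :
  (s ^+ u)%g p < (s ^+ t)%g p -> suffix_lt w c u t.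
Proof.
move=> H; have Ne : u != t by apply: contraTneq H => ->; rewrite ltnn.
rewrite /suffix_lt; case: (itin_twist_lt n s_uni H) => [T|A].
  by rewrite -(@eq_twist_lt n _ _ _ _ (fun k _ => itin_orbit u k) (fun k _ => itin_orbit t k)) T.
have E : same_suffix w u t.
  by apply/forallP => k; rewrite -!/(suffix_of w _ k) -!itin_orbit A.
by rewrite E Ne -(orbit_lt_twins E Ne) H orbT.
Qed.

Lemma suffix_lt_orbitE u t : suffix_lt w c u t = ((s ^+ u)%g p < (s ^+ t)%g p).
Proof.
apply/idP/idP => [H|/suffix_lt_of_orbit_lt //].
have [E|Ne] := eqVneq u t; first by rewrite E suffix_ltxx in H.
case: (ltngtP ((s ^+ u)%g p) ((s ^+ t)%g p)) => // [Hgt|/val_inj Eut].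
  by have := suffix_lt_of_orbit_lt Hgt; rewrite (negbTE (suffix_lt_asym w_adm H)).
by case/eqP: Ne; apply/val_inj/(cyclic_expg_inj s_cyc (ltn_ord u) (ltn_ord t) Eut).
Qed.

Lemma rank_perm_orbit t : rank_perm c w_adm t = (s ^+ t)%g p.
Proof.
apply: ord_inj; rewrite rank_permE /rank.
rewrite -[RHS](card_perm_lt (orbit_perm p s_cyc) (ltnW (ltn_ord ((s ^+ t)%g p)))).
by apply: eq_card => u; rewrite !inE suffix_lt_orbitE orbit_permE.
Qed.

Lemma realization_unique : s = realization c w_adm /\ p = rank_perm c w_adm ord0.
Proof.
split; last by rewrite rank_perm_orbit expg0 perm1.
apply/permP => y; have [t ->] : exists t, y = rank_perm c w_adm t.
  by exists ((rank_perm c w_adm)^-1%g y); rewrite permKV.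
by rewrite realization_rank !rank_perm_orbit -permM -expgSr /= cyclic_expg_mod.
Qed.

End Uniqueness.

Section Counting.

Variable m : nat.
Local Notation n := m.+1.
Implicit Types (w : {ffun 'I_n -> bool}) (e : nat).

Definition fiber e w := [set sp : {perm 'I_n} * 'I_n |
  [&& cyclic_perm sp.1, unimodal_at sp.1 e & itinerary sp.1 e sp.2 == w]].

Lemma realization_bit w (w_adm : admissible w) b : odd_square w ->
  (rank_perm b w_adm ord0 < (realization b w_adm ^+ period w)%g (rank_perm b w_adm ord0)) = b.
Proof.
case/andP=> /eqP w_sq _; rewrite realization_expg rank_perm_lt.
have Hp : period w < n by rewrite -w_sq -addnn -addn1 leq_add2l period_gt0.
set t := inord _; have Et : (t : nat) = period w by rewrite inordK ?modn_small ?ltn_pmod.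
have E : same_suffix w ord0 t.
  by apply/same_suffixP => k; rewrite Et add0n addnC (is_periodP _ _ (period_is_period w)).
have Ne : ord0 != t by rewrite -val_eqE /= Et eq_sym -lt0n period_gt0.
by rewrite /suffix_lt same_suffix_twist_lt // E Ne /ones big_ord0 addbF.
Qed.

Lemma card_fiber_admissible w : admissible w -> #|fiber (zeros w) w| = multiplicity w.
Proof.
move=> w_adm; pose pr b := (realization b w_adm, rank_perm b w_adm ord0).
have pr_fiber b : pr b \in fiber (zeros w) w.
  by rewrite inE /= realization_cyclic realization_unimodal_at itinerary_realization eqxx.
have fiber_pr s p : (s, p) \in fiber (zeros w) w -> (s, p) = pr (p < (s ^+ period w)%g p).
  rewrite inE /= => /and3P[Hc Hu /eqP Hw].
  by have [Es Ep] := realization_unique w_adm Hc Hu Hw; rewrite /pr -Es -Ep.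
have -> : fiber (zeros w) w = [set pr b | b : bool].
  apply/setP => -[s p]; apply/idP/imsetP => [/fiber_pr ->|[b _ ->]]; last exact: pr_fiber.
  by exists (p < (s ^+ period w)%g p).
rewrite /multiplicity; case: eqP => [Ep|Np].
  have E : pr true = pr false.
    by rewrite [LHS]fiber_pr ?pr_fiber //= Ep cyclic_expg_n ?realization_cyclic ?ltnn.
  apply/eqP/cards1P; exists (pr false); apply/setP => sp; rewrite in_set1.
  by apply/imsetP/eqP => [[[] _ ->]|->] //; exists false.
have Hsq : odd_square w by move: (w_adm); rewrite /admissible; case: eqP.
rewrite Hsq card_imset ?card_bool // => b b'.
by move/(congr1 (fun sp : {perm 'I_n} * 'I_n => sp.2 < (sp.1 ^+ period w)%g sp.2)); rewrite /= !realization_bit.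
Qed.

Lemma fiber_eq0 e w : e <= n -> (zeros w != e) || ~~ admissible w -> fiber e w = set0.
Proof.
move=> He H; apply/setP => -[s p]; rewrite !inE /=; apply/negP => /and3P[Hc Hu /eqP Hw].
by move: H; rewrite -Hw zeros_itinerary ?admissible_itinerary ?eqxx.
Qed.

Lemma card_fiber e w : e <= n -> #|fiber e w| = (zeros w == e) * multiplicity w.
Proof.
move=> He; have [<-|Nz] := eqVneq (zeros w) e; last by rewrite fiber_eq0 ?cards0 // Nz.
have [w_adm|w_nadm] := boolP (admissible w); first by rewrite card_fiber_admissible // mul1n.
rewrite fiber_eq0 ?w_nadm ?orbT ?zeros_le // cards0 /multiplicity.
by move: w_nadm; rewrite /admissible; case: (period w == n); case: odd_square.
Qed.

Definition turning e := [set s : {perm 'I_n} | cyclic_perm s && unimodal_at s e].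

Lemma card_turning_sum e : e <= n ->
  #|turning e| * n = \sum_(w : {ffun 'I_n -> bool}) (zeros w == e) * multiplicity w.
Proof.
move=> He; have -> : #|turning e| * n = #|setX (turning e) [set: 'I_n]|.
  by rewrite cardsX cardsT card_ord.
rewrite -sum1_card (partition_big (fun sp => itinerary sp.1 e sp.2) predT) //=.
apply: eq_bigr => w _; rewrite -card_fiber // -sum1_card; apply: eq_bigl => sp.
by rewrite !inE andbT andbA.
Qed.

Lemma card_turning_compl e : n %% 4 != 2 -> e <= n -> #|turning e| = #|turning (n - e)|.
Proof.
move=> n_mod4 He; apply/eqP; rewrite -(eqn_pmul2r (ltn0Sn m)).
rewrite !card_turning_sum ?leq_subr // (reindex_inj (inv_inj (@complK m))) /=.
apply/eqP/eq_bigr => w _; rewrite zeros_compl multiplicity_compl //; congr (_ * _).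
by have := zeros_le w; move=> Hz; apply/eqP/eqP; lia.
Qed.

End Counting.

Section Peak.

Variable m : nat.
Local Notation n := m.+1.
Implicit Types (s : {perm 'I_n}) (x : 'I_n).
Local Notation turning := (turning m).

Definition peak s : 'I_n := (s^-1)%g ord_max.

Definition peak_set q := [set s : {perm 'I_n} | [&& cyclic_perm s, unimodal s &
  [exists j : 'I_n, (val j == q) && (val (s j) == n.-1)]]].

Lemma perm_peak s : s (peak s) = ord_max.
Proof. exact: permKV. Qed.

Lemma LambdaE i : Lambda n i = #|peak_set i.-1|.
Proof. by []. Qed.

Lemma peak_setE q s :
  (s \in peak_set q) = [&& cyclic_perm s, unimodal s & peak s == q :> nat].
Proof.
rewrite inE; congr [&& _, _ & _]; apply/existsP/eqP => [[j /andP[/eqP <- /eqP Hj]]|Hq].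
  by congr val; apply: (@perm_inj _ s); rewrite perm_peak; apply: val_inj.
by exists (peak s); rewrite /= Hq perm_peak /= !eqxx.
Qed.

Lemma lt_perm_peak s x : x != peak s -> s x < s (peak s).
Proof.
move=> Hx; have : s x != s (peak s) by rewrite (inj_eq perm_inj).
by rewrite perm_peak -val_eqE /= ltn_neqAle -ltnS ltn_ord andbT.
Qed.

Lemma unimodal_at_peak s e : unimodal_at s e -> e <= n ->
  (peak s == e :> nat) || ((peak s).+1 == e).
Proof.
move=> Hu He; set q := peak s.
have contra x : x != q -> s q < s x -> False.
  by move=> Hx /(ltn_trans (lt_perm_peak Hx)); rewrite ltnn.
case: (ltngtP q e) => [Hqe|Heq|//].
  case: (ltngtP q.+1 e) => [Hq1|Hq1|]; last by rewrite orbT.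
    have Hk : q.+1 < n by apply: leq_trans Hq1 He.
    have [/(_ Hq1) Hlt _] := unimodal_atP (k := Ordinal Hk) Hu (ltnSn q).
    by case: (contra _ _ Hlt); rewrite -val_eqE /= (gtn_eqF (ltnSn q)).
  by move: Hq1; rewrite ltnS leqNgt Hqe.
have Hj : q.-1 < n by apply: leq_ltn_trans (leq_pred q) (ltn_ord q).
have Hjq : Ordinal Hj < q by rewrite /= prednK ?(leq_ltn_trans _ Heq).
have [_ /(_ _) Hlt] := unimodal_atP Hu Hjq.
case: (contra _ _ (Hlt _)); first by rewrite -val_eqE /= (ltn_eqF Hjq).
by rewrite /= -ltnS prednK // (leq_ltn_trans _ Heq).
Qed.

Lemma peak_unimodal_at s e0 e : unimodal_at s e0 -> e0 <= n ->
  (peak s == e :> nat) || ((peak s).+1 == e) -> unimodal_at s e.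
Proof.
move=> Hu0 He0 Hq; have Hq0 := unimodal_at_peak Hu0 He0.
apply/forallP => j; apply/forallP => k; apply/implyP => Hjk.
have [H1 H2] := unimodal_atP Hu0 Hjk.
have Njk : j != k by rewrite -val_eqE /= neq_ltn Hjk.
apply/andP; split; apply/implyP => Hk.
  case: (ltnP k e0) => [/H1 //|Hk0].
  have Ek : k = peak s by apply: ord_inj; move: Hq Hq0; lia.
  by rewrite Ek in Njk *; apply: lt_perm_peak.
case: (leqP e0 j) => [/H2 //|Hj0].
have Ej : j = peak s by apply: ord_inj; move: Hq Hq0; lia.
by rewrite Ej eq_sym in Njk *; apply: lt_perm_peak.
Qed.

Lemma mem_turning s e : e <= n -> (s \in turning e) =
  [&& cyclic_perm s, unimodal s & (peak s == e :> nat) || ((peak s).+1 == e)].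
Proof.
move=> He; rewrite inE; apply/andP/and3P => [[Hc Hu]|[Hc Hun Hq]]; split => //.
- by rewrite unimodalE; apply/existsP; exists (Ordinal (He : e < n.+1)).
- exact: unimodal_at_peak.
- by case/existsP: Hun => e0 Hu0; apply: peak_unimodal_at Hu0 _ Hq; rewrite -ltnS.
Qed.

Lemma card_turning0 : #|turning 0| = #|peak_set 0|.
Proof. by apply: eq_card => s; rewrite mem_turning // peak_setE orbF. Qed.

Lemma card_turningS e : e < n -> #|turning e.+1| = #|peak_set e| + #|peak_set e.+1|.
Proof.
move=> He; have -> : turning e.+1 = peak_set e :|: peak_set e.+1.
  apply/setP => s; rewrite mem_turning // in_setU !peak_setE eqSS.
  by case: (cyclic_perm s); case: (unimodal s); rewrite //= orbC.
rewrite cardsU; suff -> : peak_set e :&: peak_set e.+1 = set0 by rewrite cards0 subn0.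
apply/setP => s; rewrite in_setI !peak_setE in_set0.
by apply/negbTE/andP => -[/and3P[_ _ /eqP H1] /and3P[_ _ /eqP H2]]; lia.
Qed.

Lemma card_peak_set_n : #|peak_set n| = 0.
Proof.
apply/eqP; rewrite cards_eq0; apply/eqP/setP => s; rewrite peak_setE in_set0.
by apply/negbTE/and3P => -[_ _ /eqP H]; have := ltn_ord (peak s); rewrite H ltnn.
Qed.

Lemma card_peak_set_sym q : n %% 4 != 2 -> q <= m -> #|peak_set q| = #|peak_set (m - q)|.
Proof.
move=> n_mod4; elim: q => [|q IH] Hq.
  have := card_turning_compl n_mod4 (leq0n n).
  by rewrite subn0 card_turning0 card_turningS // card_peak_set_n addn0 subn0.
have Hq' : q <= m := ltnW Hq.
have := card_turning_compl n_mod4 (Hq' : q.+1 <= n); rewrite card_turningS // (IH Hq').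
have -> : n - q.+1 = (m - q.+1).+1 by lia.
rewrite card_turningS; last by lia.
have -> : (m - q.+1).+1 = m - q by lia.
by lia.
Qed.

End Peak.

Theorem lemma4p3 (n : nat) (hn : 1 <= n) (hmod : n %% 4 != 2) :
  forall i : nat, 1 <= i <= n -> Lambda n i = Lambda n (n - i + 1).
Proof.
case: n hn hmod => [//|m] _ n_mod4 i /andP[i_gt0 i_le].
rewrite !LambdaE card_peak_set_sym //; last by lia.
by congr #|peak_set m _|; lia.
Qed.
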